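(* Let $T=\mathrm{diag}(t_1,t_2,t_3)$ with $|t_1|=|t_2|=s>0$ and $s_3:=|t_3|>0$, and put $u=s_3/s$. Then the condition $2\pi N_T|\det T|=1$ holds if and only if \[ s_3=\begin{cases}\left[1+\dfrac{\arctan\big(\sqrt{u^{-2}-1}\big)}{u^2\sqrt{u^{-2}-1}}\right]^{-1}, & u<1,\\[2ex] \tfrac12, & u=1,\\[1ex] \left[1-\dfrac{\sqrt{1-u^{-2}}}{2(u^2-1)}\ln\dfrac{\big|1-\sqrt{1-u^{-2}}\big|}{1+\sqrt{1-u^{-2}}}\right]^{-1}, & u>1.\end{cases} \]
   Context: $N_T$ is defined by $N_T^{-1}=\int_{S^2}(\boldsymbol n^\intercal T^{-2}\boldsymbol n)^{-2}\,\mathrm{d}^2\boldsymbol n$, where $S^2$ is the unit sphere in $\mathbb{R}^3$ with its standard surface measure. *)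

From Stdlib Require Import Reals ClassicalEpsilon.
Open Scope R_scope.

(* Value of the Riemann integral of f over [a,b] (meaningful when f is
   Riemann integrable, e.g. continuous; otherwise an unspecified real). *)
Definition RInt (f : R -> R) (a b : R) : R :=
  epsilon (inhabits 0)
    (fun I => exists pr : Riemann_integrable f a b, RiemannInt pr = I).

(* Integral over the unit sphere S^2 with its standard surface measure,
   via spherical coordinates n = (sin th cos ph, sin th sin ph, cos th),
   dA = sin th dth dph, th in [0,pi], ph in [0,2pi]. *)
Definition sphere_integral (F : R -> R -> R -> R) : R :=
  RInt (fun ph =>
          RInt (fun th => F (sin th * cos ph) (sin th * sin ph) (cos th) * sin th)
               0 PI)
       0 (2 * PI).

Definition quadTm2 (t1 t2 t3 x y z : R) : R :=
  x ^ 2 / t1 ^ 2 + y ^ 2 / t2 ^ 2 + z ^ 2 / t3 ^ 2.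

Definition N_T (t1 t2 t3 : R) : R :=
  / sphere_integral (fun x y z => / (quadTm2 t1 t2 t3 x y z) ^ 2).

Definition s3_formula (u : R) : R :=
  if Rlt_dec u 1 then
    / (1 + atan (sqrt (/ u ^ 2 - 1)) / (u ^ 2 * sqrt (/ u ^ 2 - 1)))
  else if Req_EM_T u 1 then 1 / 2
  else
    / (1 - sqrt (1 - / u ^ 2) / (2 * (u ^ 2 - 1))
           * ln (Rabs (1 - sqrt (1 - / u ^ 2)) / (1 + sqrt (1 - / u ^ 2)))).

(* In spherical coordinates with polar axis e3, n^T T^-2 n only depends on
   z = cos th and equals (1 + a z^2)/s^2 with a = u^-2 - 1 > -1.  The
   azimuthal integral is therefore trivial and, after z = cos th, the polar one
   is  s^4 \int_{-1}^{1} dz / (1 + a z^2)^2 = s^4 (1/(1+a) + P 1),  where P is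
   the odd primitive of 1/(1 + a z^2): an arctangent for a > 0 and a
   logarithm for a < 0.  The normalization 2 pi N_T |det T| = 1 then reduces to
   s3 (u^2 + P 1) = u^2, which is the displayed formula in each regime. *)
From Pilot Require Import Defs.
From Stdlib Require Import Reals ClassicalEpsilon Lra Psatz FunctionalExtensionality.
From Coquelicot Require Import Coquelicot.
Open Scope R_scope.

Lemma Defs_RInt_is_RInt (f : R -> R) (a b v : R) :
  is_RInt f a b v -> Defs.RInt f a b = v.
Proof.
intros H.
pose proof (ex_RInt_Reals_0 _ _ _ (ex_intro _ v H)) as pr.
assert (E : exists I, exists pr : Riemann_integrable f a b, RiemannInt pr = I)
  by (exists (RiemannInt pr); exists pr; reflexivity).
unfold Defs.RInt; destruct (epsilon_spec (inhabits 0) _ E) as [pr' <-].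
rewrite <- RInt_Reals; now apply is_RInt_unique.
Qed.

Lemma is_derive_eq (f : R -> R) (x l l' : R) :
  is_derive f x l -> l = l' -> is_derive f x l'.
Proof. now intros ? <-. Qed.

Lemma one_plus_mul_sqr_pos (a z : R) : -1 < a -> -1 <= z <= 1 -> 0 < 1 + a * z ^ 2.
Proof.
intros ha hz; assert (0 <= z ^ 2 <= 1) by (simpl; nra).
destruct (Rle_dec 0 a); nra.
Qed.

Definition inv_quad_prim (a z : R) : R :=
  if Rlt_dec 0 a then atan (sqrt a * z) / sqrt a
  else if Req_EM_T a 0 then z
  else (ln (1 + sqrt (-a) * z) - ln (1 - sqrt (-a) * z)) / (2 * sqrt (-a)).

Lemma inv_quad_prim_opp (a z : R) : inv_quad_prim a (- z) = - inv_quad_prim a z.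
Proof.
unfold inv_quad_prim.
destruct (Rlt_dec 0 a); [|destruct (Req_EM_T a 0)].
- rewrite Ropp_mult_distr_r_reverse, atan_opp; unfold Rdiv; ring.
- reflexivity.
- replace (1 + sqrt (- a) * - z) with (1 - sqrt (- a) * z) by ring.
  replace (1 - sqrt (- a) * - z) with (1 + sqrt (- a) * z) by ring.
  unfold Rdiv; ring.
Qed.

Lemma is_derive_inv_quad_prim (a z : R) : -1 < a -> -1 <= z <= 1 ->
  is_derive (inv_quad_prim a) z (/ (1 + a * z ^ 2)).
Proof.
intros ha hz; pose proof (one_plus_mul_sqr_pos a z ha hz).
unfold inv_quad_prim; destruct (Rlt_dec 0 a) as [hpos|hnpos].
{ pose proof (sqrt_lt_R0 a hpos); pose proof (sqrt_sqrt a (Rlt_le _ _ hpos)).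
  auto_derive; [exact I|].
  replace (sqrt a * z * (sqrt a * z * 1)) with (a * z ^ 2) by nra.
  field; lra. }
destruct (Req_EM_T a 0) as [->|hneg].
{ auto_derive; [exact I|]. now rewrite Rmult_0_l, Rplus_0_r, Rinv_1. }
assert (ha' : 0 < - a) by lra.
pose proof (sqrt_lt_R0 _ ha'); pose proof (sqrt_sqrt (- a) (Rlt_le _ _ ha')) as hbb.
assert (sqrt (- a) < 1) by (rewrite <- sqrt_1; apply sqrt_lt_1; lra).
set (b := sqrt (- a)) in *.
assert (0 < 1 + b * z) by nra; assert (0 < 1 - b * z) by nra.
auto_derive; [repeat split; lra|].
replace (a * z ^ 2) with (- (b * b) * z ^ 2) by (rewrite hbb; ring).
field; repeat split; nra.
Qed.

Definition polar_kernel (a : R) : R := / (1 + a) + inv_quad_prim a 1.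

Lemma is_derive_inv_quad_sqr_prim (a z : R) : -1 < a -> -1 <= z <= 1 ->
  is_derive (fun z => z / (2 * (1 + a * z ^ 2)) + inv_quad_prim a z / 2) z
    (/ (1 + a * z ^ 2) ^ 2).
Proof.
intros ha hz; pose proof (one_plus_mul_sqr_pos a z ha hz).
eapply is_derive_eq.
{ apply (@is_derive_plus R_AbsRing R_NormedModule).
  - auto_derive; [simpl in *; lra | reflexivity].
  - eapply is_derive_ext; [|apply (is_derive_scal (inv_quad_prim a) z (/ 2))].
    + intros t; simpl; lra.
    + now apply is_derive_inv_quad_prim. }
simpl; unfold plus, mult; simpl; field; lra.
Qed.

Lemma is_RInt_polar_kernel (a : R) : -1 < a ->
  is_RInt (fun th => sin th / (1 + a * cos th ^ 2) ^ 2) 0 PI (polar_kernel a).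
Proof.
intros ha.
set (G := fun z => z / (2 * (1 + a * z ^ 2)) + inv_quad_prim a z / 2).
assert (bound_cos : forall x, -1 <= cos x <= 1)
  by (intros x; pose proof (COS_bound x); lra).
replace (polar_kernel a) with (minus (- G (cos PI)) (- G (cos 0))).
2: { unfold G, polar_kernel, minus, plus, opp; simpl.
     rewrite cos_PI, cos_0.
     replace (inv_quad_prim a (-1)) with (- inv_quad_prim a 1)
       by (rewrite <- inv_quad_prim_opp; f_equal; lra).
     field; lra. }
apply (is_RInt_derive (V := R_CompleteNormedModule) (fun th => - G (cos th))).
- intros x _; pose proof (one_plus_mul_sqr_pos a (cos x) ha (bound_cos x)).
  eapply is_derive_eq.
  { apply (@is_derive_opp R_AbsRing R_NormedModule), (is_derive_comp G cos).
    - apply is_derive_inv_quad_sqr_prim; auto.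
    - apply is_derive_cos. }
  simpl; unfold opp, scal, mult; simpl; unfold mult; simpl; field; lra.
- intros x _; pose proof (one_plus_mul_sqr_pos a (cos x) ha (bound_cos x)).
  apply (ex_derive_continuous (K := R_AbsRing) (V := R_NormedModule)).
  auto_derive; simpl in *; nra.
Qed.

Lemma s3_formula_lt1 (u : R) : 0 < u < 1 ->
  s3_formula u * polar_kernel (/ u ^ 2 - 1) = u ^ 2.
Proof.
intros hu; assert (u ^ 2 < 1) by (simpl; nra).
assert (1 < / u ^ 2) by (rewrite <- Rinv_1; apply Rinv_lt_contravar; simpl; nra).
unfold s3_formula, polar_kernel, inv_quad_prim.
destruct (Rlt_dec u 1); [|lra]; destruct (Rlt_dec 0 (/ u ^ 2 - 1)); [|lra].
replace (1 + (/ u ^ 2 - 1)) with (/ u ^ 2) by ring; rewrite Rinv_inv, Rmult_1_r.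
set (a := / u ^ 2 - 1) in *; assert (0 < sqrt a) by (apply sqrt_lt_R0; lra).
assert (0 < atan (sqrt a)) by (rewrite <- atan_0; apply atan_increasing; lra).
field; repeat split; nra.
Qed.

Lemma s3_formula_gt1 (u : R) : 1 < u ->
  s3_formula u * polar_kernel (/ u ^ 2 - 1) = u ^ 2.
Proof.
intros hu; assert (1 < u ^ 2) by (simpl; nra).
assert (0 < / u ^ 2 < 1)
  by (split; [apply Rinv_0_lt_compat | rewrite <- Rinv_1; apply Rinv_lt_contravar]; lra).
unfold s3_formula, polar_kernel, inv_quad_prim.
destruct (Rlt_dec u 1); [lra|]; destruct (Req_EM_T u 1); [lra|].
destruct (Rlt_dec 0 (/ u ^ 2 - 1)); [lra|]; destruct (Req_EM_T (/ u ^ 2 - 1) 0); [lra|].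
replace (1 + (/ u ^ 2 - 1)) with (/ u ^ 2) by ring; rewrite Rinv_inv, Ropp_minus_distr.
pose proof (sqrt_lt_R0 (1 - / u ^ 2) ltac:(lra)).
pose proof (sqrt_sqrt (1 - / u ^ 2) ltac:(lra)) as hbb.
assert (sqrt (1 - / u ^ 2) < sqrt 1) by (apply sqrt_lt_1; lra); rewrite sqrt_1 in *.
set (b := sqrt (1 - / u ^ 2)) in *.
rewrite !Rmult_1_r, Rabs_pos_eq, ln_div by lra.
replace (u ^ 2 - 1) with (u ^ 2 * (b * b)) by (rewrite hbb; field; lra).
assert (0 < ln (1 + b) - ln (1 - b))
  by (enough (ln (1 - b) < ln (1 + b)) by lra; apply ln_increasing; lra).
set (L := ln (1 + b) - ln (1 - b)) in *.
replace (ln (1 - b) - ln (1 + b)) with (- L) by (unfold L; ring).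
assert (0 < u ^ 2 * b) by nra.
field; repeat split; nra.
Qed.

Lemma s3_formula_mul_polar_kernel (u : R) : 0 < u ->
  s3_formula u * polar_kernel (/ u ^ 2 - 1) = u ^ 2.
Proof.
intros hu; destruct (Rtotal_order u 1) as [hlt|[->|hgt]].
- now apply s3_formula_lt1.
- unfold s3_formula, polar_kernel, inv_quad_prim.
  replace (/ 1 ^ 2 - 1) with 0 by (simpl; field).
  destruct (Rlt_dec 1 1); [lra|]; destruct (Req_EM_T 1 1); [|lra].
  destruct (Rlt_dec 0 0); [lra|]; destruct (Req_EM_T 0 0); [|lra].
  simpl; field.
- now apply s3_formula_gt1.
Qed.

Lemma quadTm2_spherical (t1 t2 t3 s s3 th ph : R) :
  0 < s -> 0 < s3 -> t1 ^ 2 = s ^ 2 -> t2 ^ 2 = s ^ 2 -> t3 ^ 2 = s3 ^ 2 ->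
  quadTm2 t1 t2 t3 (sin th * cos ph) (sin th * sin ph) (cos th)
  = (1 + (/ (s3 / s) ^ 2 - 1) * cos th ^ 2) / s ^ 2.
Proof.
intros hs hs3 e1 e2 e3.
assert (sin_sqr : forall x, sin x ^ 2 = 1 - cos x ^ 2)
  by (intros x; pose proof (sin2_cos2 x); unfold Rsqr in *; simpl; lra).
unfold quadTm2; rewrite e1, e2, e3, !Rpow_mult_distr, !sin_sqr.
field; lra.
Qed.

Lemma sphere_integral_uniaxial (t1 t2 t3 s s3 : R) :
  0 < s -> 0 < s3 -> t1 ^ 2 = s ^ 2 -> t2 ^ 2 = s ^ 2 -> t3 ^ 2 = s3 ^ 2 ->
  sphere_integral (fun x y z => / quadTm2 t1 t2 t3 x y z ^ 2)
  = 2 * PI * (s ^ 4 * polar_kernel (/ (s3 / s) ^ 2 - 1)).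
Proof.
intros hs hs3 e1 e2 e3; pose proof PI_RGT_0.
set (a := / (s3 / s) ^ 2 - 1).
assert (ha : -1 < a).
{ enough (0 < / (s3 / s) ^ 2) by (unfold a; lra).
  apply Rinv_0_lt_compat, pow_lt, Rdiv_lt_0_compat; lra. }
assert (inner : forall ph, Defs.RInt (fun th =>
    / quadTm2 t1 t2 t3 (sin th * cos ph) (sin th * sin ph) (cos th) ^ 2 * sin th) 0 PI
  = s ^ 4 * polar_kernel a).
{ intros ph; apply Defs_RInt_is_RInt.
  eapply is_RInt_ext; [|apply (is_RInt_scal _ _ _ (s ^ 4) _ (is_RInt_polar_kernel a ha))].
  intros th _; unfold scal; simpl; unfold mult; simpl.
  rewrite (quadTm2_spherical t1 t2 t3 s s3) by assumption; fold a.
  pose proof (one_plus_mul_sqr_pos a (cos th) ha ltac:(pose proof (COS_bound th); lra)).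
  field; lra. }
unfold sphere_integral; rewrite (functional_extensionality _ _ inner).
rewrite (Defs_RInt_is_RInt _ 0 (2 * PI) _ (is_RInt_const _ _ _)).
unfold scal; simpl; unfold mult; simpl; ring.
Qed.

Lemma normalization_iff (s s3 K F : R) : 0 < s -> 0 < s3 -> F * K = (s3 / s) ^ 2 ->
  (2 * PI * / (2 * PI * (s ^ 4 * K)) * (s * s * s3) = 1 <-> s3 = F).
Proof.
intros hs hs3 hF; pose proof PI_RGT_0.
assert (hu : 0 < (s3 / s) ^ 2) by (apply pow_lt, Rdiv_lt_0_compat; lra).
assert (hK : K <> 0) by (intros ->; lra).
replace (2 * PI * / (2 * PI * (s ^ 4 * K)) * (s * s * s3)) with (s3 / (s ^ 2 * K))
  by (field; lra).
transitivity (K = s3 / s ^ 2).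
- split; intros h.
  + rewrite <- (Rmult_1_r K), <- h; field; lra.
  + rewrite h; field; lra.
- replace F with ((s3 / s) ^ 2 / K) by (rewrite <- hF; field; exact hK).
  split; intros h.
  + rewrite h; field; lra.
  + apply (Rmult_eq_reg_l s3); [|lra].
    rewrite h at 1; field; lra.
Qed.

Theorem mainTheorem4 (t1 t2 t3 s : R) :
  0 < s -> Rabs t1 = s -> Rabs t2 = s -> 0 < Rabs t3 ->
  (2 * PI * N_T t1 t2 t3 * Rabs (t1 * t2 * t3) = 1 <->
   Rabs t3 = s3_formula (Rabs t3 / s)).
Proof.
intros hs h1 h2 h3.
unfold N_T; rewrite (sphere_integral_uniaxial t1 t2 t3 s (Rabs t3)); auto.
- rewrite !Rabs_mult, h1, h2.
  apply normalization_iff; auto.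
  apply s3_formula_mul_polar_kernel, Rdiv_lt_0_compat; assumption.
- now rewrite <- pow2_abs, h1.
- now rewrite <- pow2_abs, h2.
- now rewrite <- pow2_abs.
Qed.
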